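(* For the algorithm in the context, under the standing assumptions, Assumption (R) and Assumption (A), there exists a finite $\bar\rho$ such that $\rho^{(i)}\le\bar\rho$ for all $i$.
   Context: Problem: $\min_{z\in\mathbb{R}^n}J(z)$ s.t. $g(z)\le0$, $h(z)=0$, with $J,g,h$ twice continuously differentiable ($g:\mathbb{R}^n\to\mathbb{R}^m$, $h:\mathbb{R}^n\to\mathbb{R}^p$), finitely many critical points; $(z^\star,\lambda^\star,\nu^\star)$ denotes the KKT triple of the critical point to which the iterates converge. Augmented Lagrangian: $\mathcal{L}_{\mathrm{aug}}^{\rho}(z,\lambda,\nu,s)=J(z)+(g(z)+s)^\top\lambda+h(z)^\top\nu+\frac{\rho}{2}\|g(z)+s\|^2+\frac{\rho}{2}\|h(z)\|^2$. Algorithm (iteration $i$): $d_z^{(i)}$ is the Euclidean projection of $-\alpha^{(i)}\nabla J(z^{(i)})$ (bounded $\alpha^{(i)}>0$) onto $\mathcal{C}^{(i)}=\{d: g(z^{(i)})+\nabla g(z^{(i)})^\top d\le0,\ h(z^{(i)})+\nabla h(z^{(i)})^\top d=0\}$ with KKT multipliers $\lambda_G^{(i)}\ge0,\nu_G^{(i)}$; $\lambda^{(0)}=\lambda_G^{(0)}$, $\nu^{(0)}=\nu_G^{(0)}$, $d_\lambda^{(i)}=\lambda_G^{(i)}-\lambda^{(i)}$, $d_\nu^{(i)}=\nu_G^{(i)}-\nu^{(i)}$; slack $s^{(i)}_j=\max\{0,-g_j(z^{(i)})\}$ if $\rho=0$, otherwise $\max\{0,-g_j(z^{(i)})-\lambda_j^{(i)}/\rho\}$;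 $d_s^{(i)}$ solves $g(z^{(i)})+\nabla g(z^{(i)})^\top d_z^{(i)}+s^{(i)}+d_s^{(i)}=0$. With $\phi(t,\rho)=\mathcal{L}^\rho_{\mathrm{aug}}(z^{(i)}+td_z^{(i)},\lambda^{(i)}+td_\lambda^{(i)},\nu^{(i)}+td_\nu^{(i)},s^{(i)}+td_s^{(i)})$, the penalty is $\rho^{(i)}=\rho^{(i-1)}$ if $\phi'(0,\rho^{(i-1)})\le-\frac{1}{2\alpha^{(i)}}\|d_z^{(i)}\|^2$, else $\rho^{(i)}=\max\{\hat\rho^{(i)},2\rho^{(i-1)}\}$ with $\hat\rho^{(i)}=2\|[d_\lambda^{(i)};d_\nu^{(i)}]\|/\|[g(z^{(i)})+s^{(i)};h(z^{(i)})]\|$. A step size $t^{(i)}\in(0,1]$ satisfies the Wolfe conditions $\phi(t)-\phi(0)\le\sigma_1t\phi'(0)$ and ($|\phi'(t)|\le-\sigma_2\phi'(0)$ or ($t=1$ and $\phi'(1)\le-\sigma_2\phi'(0)$)), $0<\sigma_1\le\sigma_2<\frac12$; then $(z,\lambda,\nu,s)\leftarrow(z,\lambda,\nu,s)+t^{(i)}(d_z,d_\lambda,d_\nu,d_s)$. Standing assumptions: $\mathcal{C}^{(i)}\ne\emptyset$ for all $i$; all $z^{(i)}$, $z^{(i)}+d_z^{(i)}$ lie in a compact set $\Omega$; $J,g,h$ and their first and second derivatives are uniformly bounded on $\Omega$. Assumption (R): for all $i$, $\nabla h(z^{(i)})$ together with the columns $\nabla g_j(z^{(i)})$ for $j$ active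 in the projection problem has full column rank, and strict complementarity holds. Assumption (A): for all sufficiently large $i$, $z^{(i)}+d_z^{(i)}-z^\star=o(\|z^{(i)}-z^\star\|)$, $\lambda^{(i)}+d_\lambda^{(i)}-\lambda^\star=o(\|\lambda^{(i)}-\lambda^\star\|)$, $\nu^{(i)}+d_\nu^{(i)}-\nu^\star=o(\|\nu^{(i)}-\nu^\star\|)$, and $[d_\lambda^{(i)};d_\nu^{(i)}]=\mathcal{O}(\|d_z^{(i)}\|)$. *)

From HB Require Import structures.
From mathcomp Require Import all_boot all_order all_algebra.
From mathcomp Require Import all_classical all_reals all_analysis.
Set Implicit Arguments. Unset Strict Implicit. Unset Printing Implicit Defensive.
Import Order.TTheory GRing.Theory Num.Theory.
Import numFieldNormedType.Exports.
Local Open Scope ring_scope.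
Local Open Scope classical_set_scope.

Section Defs.
Variable R : realType.

Definition dotv (k : nat) (u v : 'cV[R]_k) : R := \sum_(i < k) u i 0 * v i 0.
Definition enorm (k : nat) (u : 'cV[R]_k) : R := Num.sqrt (dotv u u).

Definition ev (n : nat) (k : 'I_n) : 'cV[R]_n := delta_mx k 0.

Definition grad (n : nat) (f : 'cV[R]_n -> R) (z : 'cV[R]_n) : 'cV[R]_n :=
  \col_k derive f z (ev k).

(* transposed Jacobian  \nabla f(z) = [\nabla f_1(z) ... \nabla f_m(z)]  (n x m) *)
Definition jacT (n m : nat) (f : 'cV[R]_n -> 'cV[R]_m) (z : 'cV[R]_n) : 'M[R]_(n, m) :=
  \matrix_(k, j) (derive f z (ev k)) j 0.

Definition C2 (n : nat) (V : normedModType R) (f : 'cV[R]_n -> V) : Prop :=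
  (forall z, differentiable f z) /\
  (forall (k : 'I_n) z, differentiable (fun y => derive f y (ev k)) z) /\
  (forall (k l : 'I_n),
      continuous (fun y => derive (fun x => derive f x (ev k)) y (ev l))).

Definition bounded_C2_on (n : nat) (V : normedModType R) (f : 'cV[R]_n -> V)
    (Omega : set 'cV[R]_n) : Prop :=
  exists M : R, forall z, Omega z ->
    `|f z| <= M /\
    (forall k : 'I_n, `|derive f z (ev k)| <= M) /\
    (forall k l : 'I_n, `|derive (fun x => derive f x (ev k)) z (ev l)| <= M).

(* KKT triple of  min J s.t. g <= 0, h = 0 *)
Definition kkt (n m p : nat) (J : 'cV[R]_n -> R) (g : 'cV[R]_n -> 'cV[R]_m)
    (h : 'cV[R]_n -> 'cV[R]_p) (z : 'cV[R]_n) (lam : 'cV[R]_m) (nu : 'cV[R]_p) : Prop :=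
  grad J z + jacT g z *m lam + jacT h z *m nu = 0 /\
  (forall j, 0 <= lam j 0) /\ (forall j, g z j 0 <= 0) /\ h z = 0 /\
  (forall j, lam j 0 * g z j 0 = 0).

Definition critical (n m p : nat) (J : 'cV[R]_n -> R) (g : 'cV[R]_n -> 'cV[R]_m)
    (h : 'cV[R]_n -> 'cV[R]_p) (z : 'cV[R]_n) : Prop :=
  exists lam nu, kkt J g h z lam nu.

Definition in_C (n m p : nat) (g : 'cV[R]_n -> 'cV[R]_m) (h : 'cV[R]_n -> 'cV[R]_p)
    (z d : 'cV[R]_n) : Prop :=
  (forall j, (g z + (jacT g z)^T *m d) j 0 <= 0) /\ h z + (jacT h z)^T *m d = 0.

Definition Laug (n m p : nat) (J : 'cV[R]_n -> R) (g : 'cV[R]_n -> 'cV[R]_m)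
    (h : 'cV[R]_n -> 'cV[R]_p) (rho : R)
    (z : 'cV[R]_n) (lam : 'cV[R]_m) (nu : 'cV[R]_p) (s : 'cV[R]_m) : R :=
  J z + dotv (g z + s) lam + dotv (h z) nu
  + rho / 2 * enorm (g z + s) ^+ 2 + rho / 2 * enorm (h z) ^+ 2.

Definition slack (m : nat) (rho : R) (gz lam : 'cV[R]_m) : 'cV[R]_m :=
  \col_j (if rho == 0 then Num.max 0 (- gz j 0)
          else Num.max 0 (- gz j 0 - lam j 0 / rho)).

(* previous penalty: rho^{(i-1)}, with rho^{(-1)} = rho_init *)
Definition rho_prev (rho_init : R) (rho : nat -> R) (i : nat) : R :=
  if i is i'.+1 then rho i' else rho_init.

Definition seq_littleo (k l : nat) (a : nat -> 'cV[R]_k) (b : nat -> 'cV[R]_l) : Prop :=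
  forall eps : R, 0 < eps ->
    exists N : nat, forall i, (N <= i)%N -> enorm (a i) <= eps * enorm (b i).

Definition seq_bigO (k l : nat) (a : nat -> 'cV[R]_k) (b : nat -> 'cV[R]_l) : Prop :=
  exists (C : R) (N : nat), forall i, (N <= i)%N -> enorm (a i) <= C * enorm (b i).

End Defs.

(* Along the search direction the derivative of the merit function can be computed exactly:
   the stationarity and complementarity conditions of the projection subproblem give
     phi'(0) = - |dz|^2 / alpha + 2 <d, c> - <lamG, s> - rho |c|^2,
   with d = [dlam; dnu] and c = [g + s; h], and <lamG, s> >= 0.  Once |d| <= C |dz|
   (the O(|dz|) part of Assumption (A), the only asymptotic hypothesis needed), Cauchy-Schwarz
   and AM-GM show that the descent test phi'(0) <= - |dz|^2 / (2 alpha) holds as soon as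
   rho >= 2 alpha C^2, and that when it fails the ratio rhohat = 2 |d| / |c| is at most
   8 alpha C^2.  So from some index on, the penalty is either kept or reset to at most
   8 amax C^2, and it stays bounded. *)

From HB Require Import structures.
From mathcomp Require Import all_boot all_order all_algebra.
From mathcomp Require Import all_classical all_reals all_analysis.
From mathcomp Require Import ring lra.
Import Order.TTheory GRing.Theory Num.Theory.
Import numFieldNormedType.Exports.
Local Open Scope ring_scope.
Local Open Scope classical_set_scope.

Set Implicit Arguments. Unset Strict Implicit.

Section InnerProduct.
Variables (R : realType) (k : nat).
Implicit Types (u v w : 'cV[R]_k) (a : R).

Lemma dotvC u v : dotv u v = dotv v u.
Proof. by apply: eq_bigr => i _; rewrite mulrC. Qed.

Lemma dotvDl u v w : dotv (u + v) w = dotv u w + dotv v w.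
Proof. by rewrite /dotv -big_split; apply: eq_bigr => i _; rewrite mxE mulrDl. Qed.

Lemma dotvNl u w : dotv (- u) w = - dotv u w.
Proof. by rewrite /dotv -sumrN; apply: eq_bigr => i _; rewrite mxE mulNr. Qed.

Lemma dotvZl a u w : dotv (a *: u) w = a * dotv u w.
Proof. by rewrite /dotv mulr_sumr; apply: eq_bigr => i _; rewrite mxE mulrA. Qed.

Lemma dotvBl u v w : dotv (u - v) w = dotv u w - dotv v w.
Proof. by rewrite dotvDl dotvNl. Qed.

Lemma dotvDr u v w : dotv w (u + v) = dotv w u + dotv w v.
Proof. by rewrite dotvC dotvDl !(dotvC w). Qed.

Lemma dotvNr u w : dotv w (- u) = - dotv w u.
Proof. by rewrite dotvC dotvNl dotvC. Qed.

Lemma dotvBr u v w : dotv w (u - v) = dotv w u - dotv w v.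
Proof. by rewrite dotvDr dotvNr. Qed.

Lemma dotvZr a u w : dotv w (a *: u) = a * dotv w u.
Proof. by rewrite dotvC dotvZl dotvC. Qed.

Lemma dotv0l u : dotv 0 u = 0.
Proof. by rewrite -(scale0r 0) dotvZl mul0r. Qed.

Lemma dotv_ge0 u v : (forall j, 0 <= u j 0) -> (forall j, 0 <= v j 0) -> 0 <= dotv u v.
Proof. by move=> u0 v0; apply: sumr_ge0 => j _; rewrite mulr_ge0. Qed.

Lemma dotvv_ge0 u : 0 <= dotv u u.
Proof. by apply: sumr_ge0 => i _; rewrite -expr2 sqr_ge0. Qed.

Lemma dotvv_eq0 u : (dotv u u == 0) = (u == 0).
Proof.
apply/idP/eqP => [|->]; last by rewrite dotv0l.
rewrite psumr_eq0 => [/allP u0|i _]; last by rewrite -expr2 sqr_ge0.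
apply/matrixP => i j; rewrite ord1 mxE.
by have := u0 i (mem_index_enum i); rewrite /= mulf_eq0 orbb => /eqP.
Qed.

Lemma enorm_ge0 u : 0 <= enorm u.
Proof. exact: sqrtr_ge0. Qed.

Lemma enorm_sqr u : enorm u ^+ 2 = dotv u u.
Proof. by rewrite sqr_sqrtr // dotvv_ge0. Qed.

Lemma enorm_eq0 u : (enorm u == 0) = (u == 0).
Proof. by rewrite -sqrf_eq0 enorm_sqr dotvv_eq0. Qed.

Lemma dotv_le_enorm u v : dotv u v <= enorm u * enorm v.
Proof.
have [->|u0] := eqVneq u 0; first by rewrite dotv0l mulr_ge0 ?enorm_ge0.
have [->|v0] := eqVneq v 0; first by rewrite dotvC dotv0l mulr_ge0 ?enorm_ge0.
have u_gt0 : 0 < enorm u by rewrite lt_def enorm_eq0 u0 enorm_ge0.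
have v_gt0 : 0 < enorm v by rewrite lt_def enorm_eq0 v0 enorm_ge0.
have := dotvv_ge0 (enorm v *: u - enorm u *: v).
rewrite !(dotvBl, dotvBr, dotvZl, dotvZr) -!enorm_sqr (dotvC v u) => sq0.
rewrite -(ler_pM2l (mulr_gt0 u_gt0 v_gt0)); nra.
Qed.

End InnerProduct.

Lemma dotv_mulmx (R : realType) k l (A : 'M[R]_(k, l)) (x : 'cV[R]_l) (y : 'cV[R]_k) :
  dotv (A *m x) y = dotv x (A^T *m y).
Proof.
rewrite /dotv; under eq_bigr do rewrite mxE mulr_suml.
rewrite exchange_big /=; apply: eq_bigr => j _.
rewrite mxE mulr_sumr; apply: eq_bigr => i _.
by rewrite mxE mulrCA mulrA [A i j * _]mulrC.
Qed.

Lemma dotv_col_mx (R : realType) k l (a c : 'cV[R]_k) (b d : 'cV[R]_l) :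
  dotv (col_mx a b) (col_mx c d) = dotv a c + dotv b d.
Proof.
by rewrite /dotv big_split_ord /=; congr (_ + _); apply: eq_bigr => i _;
  rewrite ?col_mxEu ?col_mxEd.
Qed.

Section DerivativeAlongLine.
Variables (R : realType) (n : nat) (W : normedModType R).
Implicit Types (f : 'cV[R]_n -> W) (z dz : 'cV[R]_n).

(* The difference quotients of [t |-> f (z + t dz)] at 0 are those defining ['D_dz f z]. *)
Let line_quotientE f z dz :
  (fun h : R => h^-1 *: (((fun t : R => f (z + t *: dz)) \o shift 0) (h *: 1)
                         - f (z + 0 *: dz)))
  = (fun h : R => h^-1 *: ((f \o shift z) (h *: dz) - f z)).
Proof.
apply/funext => h /=; rewrite scale0r addr0 addr0 -[h%:A]/(h * 1) mulr1 (addrC z).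
reflexivity.
Qed.

Lemma is_derive_line f z dz :
  derivable f z dz -> is_derive (0 : R) (1 : R) (fun t : R => f (z + t *: dz)) ('D_dz f z).
Proof.
by move=> df; apply: DeriveDef; rewrite /derivable /derive line_quotientE.
Qed.

Lemma derive_ev_sum f z dz : differentiable f z ->
  'D_dz f z = \sum_(k < n) dz k 0 *: 'D_(ev R k) f z.
Proof.
move=> df; rewrite deriveE // {1}(matrix_sum_delta dz) linear_sum.
by apply: eq_bigr => k _; rewrite big_ord1 linearZ deriveE.
Qed.

End DerivativeAlongLine.

Lemma jacT_mulmx (R : realType) n k (f : 'cV[R]_n -> 'cV[R]_k) z dz :
  differentiable f z -> (jacT f z)^T *m dz = 'D_dz f z.
Proof.
move=> df; apply/matrixP => j i; rewrite ord1 derive_ev_sum // summxE !mxE.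
by apply: eq_bigr => l _; rewrite !mxE mulrC.
Qed.

Lemma grad_dotv (R : realType) n (f : 'cV[R]_n -> R) z dz :
  differentiable f z -> dotv (grad f z) dz = 'D_dz f z.
Proof.
move=> df; rewrite derive_ev_sum //; apply: eq_bigr => l _.
by rewrite mxE mulrC.
Qed.

Section CoordinateDerivatives.
Variables (R : realType) (k : nat) (x : R).

Lemma is_derive_coord (F : R -> 'cV[R]_k) dF j :
  is_derive x (1 : R) F dF -> is_derive x (1 : R) (fun t => F t j 0) (dF j 0).
Proof.
move=> [dF_ex dF_val]; apply: DeriveDef; first by have := (derivable_mxP F x 1).1 dF_ex j 0.
by move: dF_val; rewrite derive_mx // => <-; rewrite mxE.
Qed.

Lemma is_derive_dotv (U V : R -> 'cV[R]_k) dU dV :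
  is_derive x (1 : R) U dU -> is_derive x (1 : R) V dV ->
  is_derive x (1 : R) (fun t => dotv (U t) (V t)) (dotv (U x) dV + dotv dU (V x)).
Proof.
move=> derU derV.
have := is_derive_sum (fun j => is_deriveM (is_derive_coord j derU) (is_derive_coord j derV)).
have -> : \sum_(j < k) ((fun t => U t j 0) * (fun t => V t j 0))
          = (fun t => dotv (U t) (V t)) by apply/funext => t; rewrite fct_sumE.
move/is_derive_eq; apply; rewrite /dotv -big_split /=.
by apply: eq_bigr => j _; rewrite /GRing.scale /= (mulrC (V x j 0)).
Qed.

End CoordinateDerivatives.

Lemma is_derive_affine (R : realType) k (a b : 'cV[R]_k) :
  is_derive (0 : R) (1 : R) (fun t : R => a + t *: b) b.
Proof. by have := is_derive_line (@derivable_id _ _ a b); rewrite derive_id. Qed.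

Section AugmentedLagrangianDerivative.
Variables (R : realType) (n m p : nat).
Variables (J : 'cV[R]_n -> R) (g : 'cV[R]_n -> 'cV[R]_m) (h : 'cV[R]_n -> 'cV[R]_p).

Lemma derive1_Laug_line r z dz lam dlam nu dnu s ds :
  differentiable J z -> differentiable g z -> differentiable h z ->
  derive1 (fun t => Laug J g h r (z + t *: dz) (lam + t *: dlam) (nu + t *: dnu)
                                (s + t *: ds)) 0
  = 'D_dz J z + dotv (g z + s) dlam + dotv ('D_dz g z + ds) lam
    + dotv (h z) dnu + dotv ('D_dz h z) nu
    + r * dotv (g z + s) ('D_dz g z + ds) + r * dotv (h z) ('D_dz h z).
Proof.
move=> dJ dg dh.
pose G t := g (z + t *: dz) + (s + t *: ds).
pose H t := h (z + t *: dz).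
have -> : (fun t => Laug J g h r (z + t *: dz) (lam + t *: dlam) (nu + t *: dnu)
                                (s + t *: ds))
  = fun t => J (z + t *: dz) + dotv (G t) (lam + t *: dlam) + dotv (H t) (nu + t *: dnu)
             + r / 2 * dotv (G t) (G t) + r / 2 * dotv (H t) (H t).
  by apply/funext => t; rewrite /Laug !enorm_sqr.
have dG : is_derive (0 : R) (1 : R) G ('D_dz g z + ds).
  exact: is_deriveD (is_derive_line (diff_derivable dg)) (is_derive_affine s ds).
have dH : is_derive (0 : R) (1 : R) H ('D_dz h z) := is_derive_line (diff_derivable dh).
rewrite derive1E; apply: derive_val; apply: is_derive_eq.
  exact: is_deriveD (is_deriveD (is_deriveD (is_deriveD
    (is_derive_line (diff_derivable dJ))
    (is_derive_dotv dG (is_derive_affine lam dlam)))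
    (is_derive_dotv dH (is_derive_affine nu dnu)))
    (is_deriveZ (r / 2) (is_derive_dotv dG dG)))
    (is_deriveZ (r / 2) (is_derive_dotv dH dH)).
rewrite /G /H /= !scale0r !addr0 /GRing.scale /=.
rewrite (dotvC ('D_dz g z + ds) (g z + s)) (dotvC ('D_dz h z) (h z)).
lra.
Qed.

Lemma derive1_Laug_search_direction r alpha z dz lam lamG nu nuG s :
  differentiable J z -> differentiable g z -> differentiable h z ->
  h z + (jacT h z)^T *m dz = 0 ->
  grad J z + alpha^-1 *: dz + jacT g z *m lamG + jacT h z *m nuG = 0 ->
  (forall j, lamG j 0 * (g z + (jacT g z)^T *m dz) j 0 = 0) ->
  derive1 (fun t => Laug J g h r (z + t *: dz) (lam + t *: (lamG - lam))
     (nu + t *: (nuG - nu)) (s + t *: - (g z + (jacT g z)^T *m dz + s))) 0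
  = - (enorm dz ^+ 2 / alpha)
    + 2 * dotv (col_mx (lamG - lam) (nuG - nu)) (col_mx (g z + s) (h z))
    - dotv lamG s - r * enorm (col_mx (g z + s) (h z)) ^+ 2.
Proof.
move=> dJ dg dh lin_h stat compl.
rewrite derive1_Laug_line // -!jacT_mulmx // -grad_dotv // !enorm_sqr !dotv_col_mx.
set Dg := (jacT g z)^T *m dz; set Dh := (jacT h z)^T *m dz.
have stat_dz : dotv (grad J z) dz + alpha^-1 * dotv dz dz + dotv lamG Dg + dotv nuG Dh = 0.
  by have := congr1 (fun v => dotv v dz) stat; rewrite !dotvDl dotvZl !dotv_mulmx dotv0l.
have compl_dz : dotv lamG (g z + Dg) = 0 by rewrite /dotv big1.
have Dh_eq : Dh = - h z by apply/eqP; rewrite -addr_eq0 addrC lin_h.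
have -> : Dg + - (g z + Dg + s) = - (g z + s) by rewrite !opprD addrA addrCA subrr addr0.
rewrite Dh_eq in stat_dz *.
rewrite !(dotvDl, dotvDr, dotvNl, dotvNr, dotvBl, dotvBr) in stat_dz compl_dz *.
rewrite !(dotvC lamG) !(dotvC lam) (dotvC nuG) (dotvC nu) (dotvC s (g z)) in stat_dz compl_dz *.
lra.
Qed.

End AugmentedLagrangianDerivative.

Lemma descent_test_of_large_penalty (R : realFieldType) (a C step dmult viol cross r : R) :
  0 < a -> 0 <= C -> 0 <= step -> 0 <= viol ->
  dmult <= C * step -> cross <= dmult * viol -> 2 * a * C ^+ 2 <= r ->
  - (step ^+ 2 / a) + 2 * cross - r * viol ^+ 2 <= - (step ^+ 2 / (2 * a)).
Proof.
move=> a_gt0 C_ge0 step_ge0 viol_ge0 dmult_le cross_le r_ge.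
have cross_le' : cross <= C * step * viol.
  by apply: le_trans cross_le _; rewrite ler_wpM2r.
have amgm : 4 * a * cross <= step ^+ 2 + 2 * a * r * viol ^+ 2.
  have sq := sqr_ge0 (step - 2 * a * C * viol).
  have pen : 2 * a * C ^+ 2 * (2 * a * viol ^+ 2) <= r * (2 * a * viol ^+ 2).
    by rewrite ler_wpM2r // mulr_ge0 ?sqr_ge0 // mulr_ge0 // ltW.
  have : 4 * a * cross <= 4 * a * (C * step * viol) by rewrite ler_pM2l // mulr_gt0.
  nra.
have -> : step ^+ 2 / a = 2 * (step ^+ 2 / (2 * a)) by field; rewrite gt_eqF.
suff : 2 * a * (2 * cross - r * viol ^+ 2) <= 2 * a * (step ^+ 2 / (2 * a)).
  by rewrite ler_pM2l ?mulr_gt0 //; lra.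
have -> : 2 * a * (step ^+ 2 / (2 * a)) = step ^+ 2 by field; rewrite gt_eqF.
lra.
Qed.

Lemma penalty_ratio_le_of_descent_test_fails (R : realFieldType) (a C step dmult viol cross r : R) :
  0 < a -> 0 <= C -> 0 <= dmult -> 0 <= viol ->
  dmult <= C * step -> cross <= dmult * viol -> 0 <= r ->
  - (step ^+ 2 / (2 * a)) < - (step ^+ 2 / a) + 2 * cross - r * viol ^+ 2 ->
  2 * dmult / viol <= 8 * a * C ^+ 2.
Proof.
move=> a_gt0 C_ge0 dmult_ge0 viol_ge0 dmult_le cross_le r_ge0 fails.
have [->|viol_neq0] := eqVneq viol 0.
  by rewrite invr0 mulr0 mulr_ge0 ?sqr_ge0 // mulr_ge0 // ltW.
have viol_gt0 : 0 < viol by rewrite lt_def viol_neq0.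
have step_lt : step ^+ 2 < 4 * a * (dmult * viol).
  have e : step ^+ 2 / a = 2 * (step ^+ 2 / (2 * a)) by field; rewrite gt_eqF.
  rewrite e in fails.
  have q_lt : step ^+ 2 / (2 * a) < 2 * (dmult * viol).
    by have := mulr_ge0 r_ge0 (sqr_ge0 viol); lra.
  have -> : step ^+ 2 = 2 * a * (step ^+ 2 / (2 * a)) by field; rewrite gt_eqF.
  nra.
have dmult_le' : dmult <= 4 * a * C ^+ 2 * viol.
  have [->|dmult_neq0] := eqVneq dmult 0.
    by rewrite mulr_ge0 // mulr_ge0 ?sqr_ge0 // mulr_ge0 // ltW.
  have dmult_gt0 : 0 < dmult by rewrite lt_def dmult_neq0.
  by rewrite -(ler_pM2l dmult_gt0); nra.
by rewrite ler_pdivrMr //; lra.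
Qed.

Lemma penalty_update_keep_or_le (R : realFieldType)
    (a amax C step dmult viol cross r dphi0 : R) :
  0 < a -> a <= amax -> 0 <= C -> 0 <= step -> 0 <= dmult -> 0 <= viol ->
  dmult <= C * step -> cross <= dmult * viol -> 0 <= r ->
  dphi0 <= - (step ^+ 2 / a) + 2 * cross - r * viol ^+ 2 ->
  let r' := if dphi0 <= - (step ^+ 2 / (2 * a)) then r
            else Num.max (2 * dmult / viol) (2 * r) in
  r' = r \/ r' <= 8 * amax * C ^+ 2.
Proof.
move=> a_gt0 a_le C_ge0 step_ge0 dmult_ge0 viol_ge0 dmult_le cross_le r_ge0 dphi0_le /=.
case: ifPn => [_|]; [by left | rewrite -ltNge => test_fails; right].
have fails := lt_le_trans test_fails dphi0_le.
have r_lt : r < 2 * a * C ^+ 2.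
  rewrite ltNge; apply/negP => /(descent_test_of_large_penalty a_gt0 C_ge0 step_ge0 viol_ge0
    dmult_le cross_le).
  by rewrite leNgt fails.
have ratio_le := penalty_ratio_le_of_descent_test_fails a_gt0 C_ge0 dmult_ge0 viol_ge0
  dmult_le cross_le r_ge0 fails.
have C2_ge0 := sqr_ge0 C.
rewrite ge_max; apply/andP; split; nra.
Qed.

Lemma slack_ge0 (R : realType) m (r : R) (gz lam : 'cV[R]_m) j : 0 <= slack r gz lam j 0.
Proof. by rewrite mxE; case: ifP => _; rewrite le_max lexx. Qed.

Lemma bounded_of_eventually_keep_or_le (R : realType) (u0 B : R) (u : nat -> R) N :
  (forall i, (N <= i)%N -> u i = rho_prev u0 u i \/ u i <= B) ->
  exists M, forall i, u i <= M.
Proof.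
move=> keep_or_le; set M := \sum_(j < N) `|u j| + `|u0| + `|B|.
have sum_ge0 : 0 <= \sum_(j < N) `|u j| by rewrite sumr_ge0.
have step i : rho_prev u0 u i <= M -> u i <= M.
  move=> prev_le; have [iN|Ni] := ltnP i N.
    have : `|u i| <= \sum_(j < N) `|u j|.
      by rewrite (bigD1 (Ordinal iN)) //= lerDl sumr_ge0.
    by have := ler_norm (u i); have := normr_ge0 u0; have := normr_ge0 B; rewrite /M; lra.
  case: (keep_or_le i Ni) => [->//|u_le].
  by have := ler_norm B; have := normr_ge0 u0; rewrite /M; lra.
exists M; elim=> [|i IH]; apply: step => //=.
by have := ler_norm u0; have := normr_ge0 B; rewrite /M; lra.
Qed.

Unset Implicit Arguments. Set Strict Implicit.

Theorem lemma4p11 (R : realType) (n m p : nat)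
  (J : 'cV[R]_n -> R) (g : 'cV[R]_n -> 'cV[R]_m) (h : 'cV[R]_n -> 'cV[R]_p)
  (Omega : set 'cV[R]_n) (sigma1 sigma2 rho_init : R)
  (alpha t rho : nat -> R)
  (z dz : nat -> 'cV[R]_n) (lam lamG : nat -> 'cV[R]_m) (nu nuG : nat -> 'cV[R]_p)
  (zs : 'cV[R]_n) (lams : 'cV[R]_m) (nus : 'cV[R]_p) :
  (* problem data *)
  C2 J -> C2 g -> C2 h ->
  finite_set [set x | critical J g h x] ->
  (* convergence of the iterates to a critical point with KKT triple (zs, lams, nus) *)
  z @ \oo --> zs ->
  kkt J g h zs lams nus ->
  (* algorithm parameters *)
  0 < sigma1 -> sigma1 <= sigma2 -> sigma2 < 1 / 2 ->
  0 <= rho_init ->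
  (exists amax : R, forall i, 0 < alpha i <= amax) ->
  (* projection step: dz i is the Euclidean projection of -alpha i * grad J onto C^{(i)},
     with KKT multipliers (lamG i, nuG i) *)
  (forall i, in_C g h (z i) (dz i)) ->
  (forall i d, in_C g h (z i) d ->
     enorm (dz i + alpha i *: grad J (z i)) <= enorm (d + alpha i *: grad J (z i))) ->
  (forall i, grad J (z i) + (alpha i)^-1 *: dz i
             + jacT g (z i) *m lamG i + jacT h (z i) *m nuG i = 0) ->
  (forall i j, 0 <= lamG i j 0) ->
  (forall i j, lamG i j 0 * (g (z i) + (jacT g (z i))^T *m dz i) j 0 = 0) ->
  (* initial multipliers *)
  lam 0%N = lamG 0%N -> nu 0%N = nuG 0%N ->
  (let dlam i := lamG i - lam i in
   let dnu i := nuG i - nu i in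
   let s i := slack (rho_prev rho_init rho i) (g (z i)) (lam i) in
   let ds i := - (g (z i) + (jacT g (z i))^T *m dz i + s i) in
   let phi i r tt := Laug J g h r (z i + tt *: dz i) (lam i + tt *: dlam i)
                                  (nu i + tt *: dnu i) (s i + tt *: ds i) in
   let dphi i r tt := derive1 (phi i r) tt in
   let rhohat i := 2 * enorm (col_mx (dlam i) (dnu i))
                   / enorm (col_mx (g (z i) + s i) (h (z i))) in
   (* penalty update *)
   (forall i, rho i = if dphi i (rho_prev rho_init rho i) 0
                         <= - (enorm (dz i) ^+ 2 / (2 * alpha i))
                      then rho_prev rho_init rho i
                      else Num.max (rhohat i) (2 * rho_prev rho_init rho i)) ->
   (* Wolfe step size *)
   (forall i, 0 < t i <= 1) ->
   (forall i, phi i (rho i) (t i) - phi i (rho i) 0 <= sigma1 * t i * dphi i (rho i) 0) ->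
   (forall i, `|dphi i (rho i) (t i)| <= - sigma2 * dphi i (rho i) 0 \/
              (t i = 1 /\ dphi i (rho i) 1 <= - sigma2 * dphi i (rho i) 0)) ->
   (* updates *)
   (forall i, z i.+1 = z i + t i *: dz i) ->
   (forall i, lam i.+1 = lam i + t i *: dlam i) ->
   (forall i, nu i.+1 = nu i + t i *: dnu i) ->
   (* standing assumptions *)
   (forall i, exists d, in_C g h (z i) d) ->
   compact Omega ->
   (forall i, Omega (z i) /\ Omega (z i + dz i)) ->
   bounded_C2_on J Omega -> bounded_C2_on g Omega -> bounded_C2_on h Omega ->
   (* Assumption (R) *)
   (forall i (a : 'cV[R]_p) (b : 'cV[R]_m),
      (forall j, (g (z i) + (jacT g (z i))^T *m dz i) j 0 < 0 -> b j 0 = 0) ->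
      jacT h (z i) *m a + jacT g (z i) *m b = 0 -> a = 0 /\ b = 0) ->
   (forall i j, (g (z i) + (jacT g (z i))^T *m dz i) j 0 = 0 -> 0 < lamG i j 0) ->
   (* Assumption (A) *)
   seq_littleo (fun i => z i + dz i - zs) (fun i => z i - zs) ->
   seq_littleo (fun i => lam i + dlam i - lams) (fun i => lam i - lams) ->
   seq_littleo (fun i => nu i + dnu i - nus) (fun i => nu i - nus) ->
   seq_bigO (fun i => col_mx (dlam i) (dnu i)) dz ->
   (* conclusion *)
   exists rhobar : R, forall i, rho i <= rhobar).
Proof.
move=> C2J C2g C2h _ _ _ _ _ _ rho_init_ge0 [amax alpha_bnd] lin_feas _ stat lamG_ge0 compl _ _.
move=> dlam dnu s ds phi dphi rhohat rho_update _ _ _ _ _ _ _ _ _ _ _ _ _ _ _ _ _ [C [N mult_bigO]].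
set rp := rho_prev rho_init rho.
have rp_ge0 : forall i, 0 <= rp i.
  elim=> [|i IH] //=; rewrite rho_update; case: ifP => // _.
  by rewrite le_max; apply/orP; right; rewrite mulr_ge0.
have dphi0_le i : dphi i (rp i) 0 <= - (enorm (dz i) ^+ 2 / alpha i)
    + 2 * dotv (col_mx (dlam i) (dnu i)) (col_mx (g (z i) + s i) (h (z i)))
    - rp i * enorm (col_mx (g (z i) + s i) (h (z i))) ^+ 2.
  rewrite /dphi /phi /ds /dlam /dnu (derive1_Laug_search_direction _ _ _ _ (C2J.1 _) (C2g.1 _)
    (C2h.1 _) (lin_feas i).2 (stat i) (compl i)).
  by rewrite lerD2r lerBlDr lerDl dotv_ge0 // => j; exact: slack_ge0.
apply: (@bounded_of_eventually_keep_or_le _ rho_init (8 * amax * `|C| ^+ 2) _ N) => i iN.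
have /andP[alpha_gt0 alpha_le] := alpha_bnd i.
have mult_le : enorm (col_mx (dlam i) (dnu i)) <= `|C| * enorm (dz i).
  by apply: le_trans (mult_bigO i iN) _; rewrite ler_wpM2r ?enorm_ge0 ?ler_norm.
rewrite rho_update -/(rp i).
exact: penalty_update_keep_or_le alpha_gt0 alpha_le (normr_ge0 C) (enorm_ge0 _) (enorm_ge0 _)
  (enorm_ge0 _) mult_le (dotv_le_enorm _ _) (rp_ge0 i) (dphi0_le i).
Qed.
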